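(* Let $\mathbf p$ be a strict–weak assignment and $\lambda/\mu$ a skew shape. There exists a labeling $\theta_{\mathbf p}:\lambda/\mu\to\mathbb P$ (an injection) such that a cover $s\lessdot t$ of $\lambda/\mu$ is a descent of $\theta_{\mathbf p}$ if and only if $O_{\mathbf p}(s\lessdot t)=\mathrm{strict}$. Consequently $s^{\mathbf p}_{\lambda/\mu}=K_{\lambda/\mu,\theta_{\mathbf p}}$.
   Context: A strict–weak assignment is $\mathbf p=(p_i)_{i\in\mathbb Z}$, $p_i\in\{\mathrm{weak},\mathrm{strict}\}$, with $\overline{\mathrm{weak}}=\mathrm{strict}$ and vice versa. The poset $\mathbb N^2$ (cell $(i,j)$ in row $i$, column $j$) has covers $(i,j)\gtrdot(i-1,j)$ and $(i,j)\gtrdot(i,j-1)$; set $O_{\mathbf p}((i,j)\gtrdot(i-1,j))=\overline{p_{j-i+1}}$ and $O_{\mathbf p}((i,j)\gtrdot(i,j-1))=p_{j-i}$. A skew shape $\lambda/\mu=\{(i,j):\mu_i<j\le\lambda_i\}$ for partitions $\mu\subseteq\lambda$ is viewed as an induced subposet of $\mathbb N^2$. A wave $\mathbf p$-tableau of shape $\lambda/\mu$ is $T:\lambda/\mu\to\mathbb P$ with $T(s)<T(t)$ for covers $s\lessdot t$ labeled strict and $T(s)\le T(t)$ for covers labeled weak; $s^{\mathbf p}_{\lambda/\mu}=\sum_T\prod_ix_i^{\#T^{-1}(i)}$. For a labeling (injection) $\theta:P\to\mathbb P$ of a finite poset, a cover $s\lessdot t$ is a descent if $\theta(s)>\theta(t)$;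 a $(P,\theta)$-partition is $\sigma:P\to\mathbb P$ with $\sigma(s)\le\sigma(t)$ on non-descent covers and $\sigma(s)<\sigma(t)$ on descent covers; $K_{P,\theta}=\sum_\sigma\prod_i x_i^{\#\sigma^{-1}(i)}$. *)

From HB Require Import structures.
From mathcomp Require Import all_boot all_order all_algebra.
Set Implicit Arguments. Unset Strict Implicit. Unset Printing Implicit Defensive.
Import GRing.Theory Num.Theory.

Inductive sw := Weak | Strict.
Definition sw_eqb (a b : sw) : bool :=
  match a, b with Weak, Weak | Strict, Strict => true | _, _ => false end.
Lemma sw_eqP : Equality.axiom sw_eqb. Proof. by case; case; constructor. Qed.
HB.instance Definition _ := hasDecEq.Build sw sw_eqP.
Definition sw_bar (a : sw) : sw := match a with Weak => Strict | Strict => Weak end.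

Definition assignment := int -> sw.

(* partitions as weakly decreasing sequences of positive integers;
   lambda_i = part la i for i >= 1 (1-indexed rows), 0 beyond the length *)
Definition is_partition (s : seq nat) : bool := sorted geq s && (0 \notin s).
Definition part (s : seq nat) (i : nat) : nat := nth 0 s i.-1.
Definition part_incl (mu la : seq nat) : Prop := forall i, part mu i <= part la i.

(* cells (i,j) of lambda/mu : row i, column j, mu_i < j <= lambda_i *)
Definition in_skew (la mu : seq nat) (c : nat * nat) : bool :=
  (1 <= c.1) && (part mu c.1 < c.2 <= part la c.1).
Definition cells (la mu : seq nat) : seq (nat * nat) :=
  [seq c <- [seq (i, j) | i <- iota 1 (size la), j <- iota 1 (head 0 la)]
     | in_skew la mu c].
Definition skew_cell (la mu : seq nat) := seq_sub (cells la mu).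

Definition leN2 (s t : nat * nat) : bool := (s.1 <= t.1) && (s.2 <= t.2).
Definition ltN2 (s t : nat * nat) : bool := (s != t) && leN2 s t.

Definition covers (la mu : seq nat) (s t : skew_cell la mu) : bool :=
  ltN2 (val s) (val t) &&
  ~~ [exists u : skew_cell la mu, ltN2 (val s) (val u) && ltN2 (val u) (val t)].

Definition Op (p : assignment) (s t : nat * nat) : option sw :=
  let: (i, j) := t in
  if s == (i.-1, j) then (if 1 <= i then Some (sw_bar (p (j%:Z - i%:Z + 1)%R)) else None)
  else if s == (i, j.-1) then (if 1 <= j then Some (p (j%:Z - i%:Z)%R) else None)
  else None.

(* coefficient extraction of a generating function sum_T prod_i x_i^{#T^-1(i)}
   over admissible maps T : C -> P.  A monomial x_1^{a_1} ... x_n^{a_n} is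
   given by the sequence [:: a_1; ...; a_n]; such T must take values in 1..n. *)
Definition series (C : finType) (adm : (C -> nat) -> bool) (a : seq nat) : nat :=
  #|[set T : {ffun C -> 'I_(size a).+1} |
     [forall c, T c != ord0 :> 'I_(size a).+1]
     && adm (fun c => nat_of_ord (T c))
     && [forall k : 'I_(size a), #|[set c | nat_of_ord (T c) == k.+1]| == nth 0 a k]]|.

Definition is_wave (p : assignment) (la mu : seq nat) (T : skew_cell la mu -> nat) : bool :=
  [forall c, 0 < T c] &&
  [forall s, forall t, covers s t ==>
     match Op p (val s) (val t) with
     | Some Strict => T s < T t
     | Some Weak => T s <= T t
     | None => false end].

Definition s_p (p : assignment) (la mu : seq nat) : seq nat -> nat :=
  series (@is_wave p la mu).

Definition is_labeling (C : finType) (theta : C -> nat) : Prop :=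
  injective theta /\ forall c, 0 < theta c.
Definition descent (la mu : seq nat) (theta : skew_cell la mu -> nat)
  (s t : skew_cell la mu) : bool := covers s t && (theta s > theta t).

Definition is_Ppartition (la mu : seq nat) (theta : skew_cell la mu -> nat)
  (sigma : skew_cell la mu -> nat) : bool :=
  [forall c, 0 < sigma c] &&
  [forall s, forall t, covers s t ==>
     (if theta s > theta t then sigma s < sigma t else sigma s <= sigma t)].

Definition K_P (la mu : seq nat) (theta : skew_cell la mu -> nat) : seq nat -> nat :=
  series (is_Ppartition theta).

From mathcomp Require Import all_boot all_order all_algebra.
From mathcomp Require Import zify.
Set Implicit Arguments. Unset Strict Implicit. Unset Printing Implicit Defensive.

(* Every cover of a skew shape joins neighbouring diagonals: a vertical cover
   goes from content k+1 down to k and is strict iff p_(k+1) is weak, a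
   horizontal one goes from k-1 up to k and is strict iff p_k is strict.  So it
   suffices to label a cell by g(content), ties broken by the row, with a g that
   decreases from k-1 to k exactly when p_k is strict; g(k) = N - k for strict
   p_k and N + k for weak p_k does this.  Wave tableaux and (P, theta)-partitions
   then obey the same inequality on every cover. *)

Lemma ltn_mulD_lex B x y r r' : r < B -> r' < B -> x != y ->
  (x * B + r < y * B + r') = (x < y).
Proof.
move=> rB r'B; case: (ltngtP x y) => [xy|yx|] //.
- by have := leq_mul xy (leqnn B); rewrite mulSn; lia.
- by have := leq_mul yx (leqnn B); rewrite mulSn; lia.
Qed.

Lemma eq_mulD_lex B x y r r' : r < B -> r' < B ->
  x * B + r = y * B + r' -> x = y /\ r = r'.
Proof.
move=> rB r'B e; have B_gt0 : 0 < B by lia.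
have := congr1 (divn^~ B) e; have := congr1 (modn^~ B) e.
by rewrite !divnMDl // !modnMDl !divn_small // !modn_small // !addn0.
Qed.

Section Zigzag.
Variables (b : pred nat) (N : nat).

Definition zigzag (E : nat) : nat := if b E then N - E else N + E.

Lemma zigzag_inj E E' : E <= N -> E' <= N -> zigzag E = zigzag E' -> E = E'.
Proof. by rewrite /zigzag; case: (b E); case: (b E'); lia. Qed.

Lemma zigzag_ltS E : E < N -> (zigzag E < zigzag E.+1) = ~~ b E.+1.
Proof. by rewrite /zigzag; case: (b E.+1); case: (b E); lia. Qed.

Lemma zigzag_gtS E : E < N -> (zigzag E.+1 < zigzag E) = b E.+1.
Proof. by rewrite /zigzag; case: (b E.+1); case: (b E); lia. Qed.

End Zigzag.

Lemma part_mono s i i' : is_partition s -> i <= i' -> part s i' <= part s i.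
Proof.
move=> /andP[s_sorted _] le_ii'; rewrite /part.
have [lt_i's | le_si'] := ltnP i'.-1 (size s); last by rewrite nth_default.
apply: (sorted_leq_nth (leT := geq)) => //; rewrite ?inE /=; try lia.
- by move=> a b c ba cb; apply: leq_trans cb ba.
- exact: leqnn.
Qed.

Section SkewShape.
Variables la mu : seq nat.
Hypotheses (la_part : is_partition la) (mu_part : is_partition mu).

Lemma in_skew_bounds i j : in_skew la mu (i, j) ->
  [/\ 0 < i <= size la & 0 < j <= head 0 la].
Proof.
move=> /and3P[/= i_gt0 mu_j j_la].
have i_size : i <= size la.
  move: j_la; rewrite /part; case: (ltnP i.-1 (size la)) => [|?]; first by lia.
  by rewrite nth_default; lia.
have := part_mono la_part i_gt0; move: j_la mu_j; rewrite /part /= nth0; lia.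
Qed.

Lemma mem_cells c : (c \in cells la mu) = in_skew la mu c.
Proof.
rewrite mem_filter; case c_skew: (in_skew la mu c) => //=.
case: c c_skew => i j /in_skew_bounds[/andP[i_gt0 i_size] /andP[j_gt0 j_head]].
by apply/allpairsP; exists (i, j); rewrite !mem_iota; split => //=; lia.
Qed.

Lemma in_skew_between a u b : in_skew la mu a -> in_skew la mu b ->
  leN2 a u -> leN2 u b -> in_skew la mu u.
Proof.
move=> /and3P[a_gt0 mu_a a_la] /and3P[_ _ b_la] /andP[a1u a2u] /andP[u1b u2b].
have := part_mono mu_part a1u; have := part_mono la_part u1b.
by rewrite /in_skew; lia.
Qed.

Lemma coversE (s t : skew_cell la mu) : covers s t ->
  val t = ((val s).1.+1, (val s).2) \/ val t = ((val s).1, (val s).2.+1).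
Proof.
move=> /andP[lt_st /existsPn no_between].
have skewP (c : skew_cell la mu) : in_skew la mu (val c) by rewrite -mem_cells (valP c).
have [s_skew t_skew] := (skewP s, skewP t).
move: (val s) (val t) lt_st s_skew t_skew no_between => [a b] [i j].
rewrite /ltN2 /leN2 xpair_eqE /= => /andP[neq_st /andP[ai bj]] s_skew t_skew no_between.
pose u := if b < j then (a, b.+1) else (a.+1, b).
have le_su : leN2 (a, b) u by rewrite /u /leN2; case: ifP => /=; lia.
have le_ut : leN2 u (i, j) by move: neq_st; rewrite /u /leN2; case: ifP => /=; lia.
have u_cell : u \in cells la mu.
  by rewrite mem_cells (in_skew_between s_skew t_skew).
have : ~~ (ltN2 (a, b) u && ltN2 u (i, j)) := no_between (SeqSub u_cell).
rewrite /ltN2 le_su le_ut !andbT negb_and !negbK.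
rewrite /u; case: ifP => _; rewrite !xpair_eqE eqxx /= ?andbT ?andTb.
- by case/orP => [/eqP/n_Sn | /andP[/eqP <- /eqP <-]] //; right.
- by case/orP => [/eqP/n_Sn | /andP[/eqP <- /eqP <-]] //; left.
Qed.

End SkewShape.

(* The content j - i shifted by the number L of rows, so that it is a nat. *)
Definition diag_index (L : nat) (c : nat * nat) : nat := c.2 + L - c.1.

Definition strict_at (p : assignment) (L : nat) : pred nat :=
  fun E => p (E%:Z - L%:Z)%R == Strict.

Definition theta_p (p : assignment) (la mu : seq nat) (c : skew_cell la mu) : nat :=
  zigzag (strict_at p (size la)) (size la + head 0 la) (diag_index (size la) (val c))
    * (size la).+1 + (val c).1.

Lemma diag_index_content L c : c.1 <= L ->
  ((diag_index L c)%:Z - L%:Z = c.2%:Z - c.1%:Z)%R.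
Proof. by rewrite /diag_index; lia. Qed.

Section Labeling.
Variables (p : assignment) (la mu : seq nat).
Hypotheses (la_part : is_partition la) (mu_part : is_partition mu).

Local Notation L := (size la).
Local Notation N := (size la + head 0 la).
Local Notation diag c := (diag_index L (val c)).
Local Notation theta := (@theta_p p la mu).

Lemma skew_cell_bounds (c : skew_cell la mu) :
  [/\ 0 < (val c).1 <= L & 0 < (val c).2 <= head 0 la].
Proof.
by have := valP c; rewrite mem_cells //; case: (val c) => i j; apply: in_skew_bounds.
Qed.

Lemma diag_index_lt (c : skew_cell la mu) : diag c < N.
Proof.
move: (skew_cell_bounds c); case: (val c) => i j /= [/andP[? ?] /andP[? ?]].
by rewrite /diag_index /=; lia.
Qed.

Lemma theta_p_gt0 c : 0 < theta c.
Proof. by have [/andP[i_gt0 _] _] := skew_cell_bounds c; apply: ltn_addl. Qed.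

Lemma theta_p_inj : injective theta.
Proof.
move=> c d; have [/andP[_ c_le] _] := skew_cell_bounds c.
have [/andP[_ d_le] _] := skew_cell_bounds d.
case/eq_mulD_lex; rewrite ?ltnS // => eq_zigzag eq_row; apply: val_inj.
have := zigzag_inj (ltnW (diag_index_lt c)) (ltnW (diag_index_lt d)) eq_zigzag.
move: c_le d_le eq_row; rewrite /diag_index.
by case: (val c) => i j; case: (val d) => i' j' /= ? ? <- ?; congr pair; lia.
Qed.

Lemma theta_p_ltE c d : diag c != diag d ->
  (theta c < theta d) = (zigzag (strict_at p L) N (diag c) < zigzag (strict_at p L) N (diag d)).
Proof.
move=> neq_diag; have [/andP[_ c_le] _] := skew_cell_bounds c.
have [/andP[_ d_le] _] := skew_cell_bounds d.
rewrite ltn_mulD_lex ?ltnS //.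
by apply: contra neq_diag => /eqP /zigzag_inj -> //; apply/ltnW/diag_index_lt.
Qed.

Lemma Op_theta_p s t : covers s t ->
  Op p (val s) (val t) = Some (if theta t < theta s then Strict else Weak).
Proof.
move=> cov; have [/andP[_ s_le] _] := skew_cell_bounds s.
have [/andP[_ t_le] _] := skew_cell_bounds t.
have [s_lt t_lt] := (diag_index_lt s, diag_index_lt t).
case: (coversE la_part mu_part cov) => vt.
- have diag_s : diag s = (diag t).+1 by move: t_le; rewrite /diag_index vt /=; lia.
  have neq_diag : diag t != diag s by rewrite diag_s neq_ltn ltnSn.
  rewrite (theta_p_ltE neq_diag) diag_s (zigzag_ltS _ t_lt).
  rewrite /strict_at -diag_s diag_index_content // vt.
  case: (val s) => i j /=; rewrite /Op eqxx /=.
  have -> : (j%:Z - i.+1%:Z + 1 = j%:Z - i%:Z)%R by lia.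
  by case: (p _).
- have diag_t : diag t = (diag s).+1 by move: s_le; rewrite /diag_index vt /=; lia.
  have neq_diag : diag t != diag s by rewrite diag_t neq_ltn ltnSn orbT.
  rewrite (theta_p_ltE neq_diag) diag_t (zigzag_gtS _ s_lt).
  rewrite /strict_at -diag_t diag_index_content // vt.
  case: (val s) => i j /=; rewrite /Op xpair_eqE (ltn_eqF (ltnSn j)) andbF eqxx.
  by case: (p _).
Qed.

End Labeling.

Lemma s_p_eq_K_P p la mu (theta : skew_cell la mu -> nat) :
  (forall s t, covers s t ->
     Op p (val s) (val t) = Some (if theta t < theta s then Strict else Weak)) ->
  s_p p la mu =1 K_P theta.
Proof.
move=> Op_theta; have wave_P f : is_wave p f = is_Ppartition theta f.
  congr andb; apply: eq_forallb => s; apply: eq_forallb => t.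
  by case cov: (covers s t) => //=; rewrite Op_theta //; case: ltnP.
by move=> a; apply: eq_card => T; rewrite !inE wave_P.
Qed.

Theorem proposition6p2 (p : assignment) (la mu : seq nat) :
  is_partition la -> is_partition mu -> part_incl mu la ->
  exists theta : skew_cell la mu -> nat,
    is_labeling theta /\
    (forall s t : skew_cell la mu, covers s t ->
       (descent theta s t <-> Op p (val s) (val t) = Some Strict)) /\
    s_p p la mu =1 K_P theta.
Proof.
move=> la_part mu_part _.
have Op_theta := Op_theta_p p la_part mu_part.
exists (@theta_p p la mu); split; [split | split].
- exact: theta_p_inj.
- exact: theta_p_gt0.
- by move=> s t cov; rewrite /descent cov Op_theta //; case: ifP.
- exact: s_p_eq_K_P.
Qed.
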